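(* Let $D$ be a $3$-dicritical digraph. Then $D$ does not contain $O_5$ as a (not necessarily induced) subdigraph.
   Context: A $2$-dicolouring is a map to $\{1,2\}$ whose colour classes induce acyclic subdigraphs (digons count as cycles). $D$ is $3$-dicritical if $D$ has no $2$-dicolouring but every proper subdigraph has one. $O_5$ is the oriented graph on vertices $u,v,x,y,z$ with arcs $xy,yz,zx$ (a directed triangle), $ux,uy,uz$, $xv,yv,zv$, and $uv$. ''Contains as a subdigraph'' means up to isomorphism. *)

From mathcomp Require Import all_boot.
Set Implicit Arguments. Unset Strict Implicit. Unset Printing Implicit Defensive.

(* A digraph is a finite vertex type V with an arc relation A : rel V
   (no parallel arcs by construction; looplessness is the hypothesis
   [irreflexive A]).  Digons x->y->x are allowed. *)

(* Digons are cycles of length 2. *)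
Definition dicycle (V : finType) (B : rel V) (s : seq V) : bool :=
  [&& s != [::], uniq s & cycle B s].

Definition acyclic_set (V : finType) (B : rel V) (S : {set V}) : Prop :=
  forall s : seq V, all (fun x => x \in S) s -> ~~ dicycle B s.

(* The subdigraph with vertex set W and arc relation B (arcs of B are
   assumed to lie inside W) has a 2-dicolouring: a map c from W to
   {1,2} (here bool) whose colour classes induce acyclic subdigraphs. *)
Definition two_dicolourable (V : finType) (W : {set V}) (B : rel V) : Prop :=
  exists c : V -> bool,
    forall b : bool, acyclic_set B [set x in W | c x == b].

Definition subdigraph (V : finType) (A : rel V) (W : {set V}) (B : rel V) : Prop :=
  forall x y, B x y -> [&& x \in W, y \in W & A x y].

Definition proper_subdigraph (V : finType) (A : rel V) (W : {set V}) (B : rel V)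
  : Prop :=
  subdigraph A W B /\ (W != setT \/ exists x y, A x y && ~~ B x y).

Definition dicritical3 (V : finType) (A : rel V) : Prop :=
  ~ two_dicolourable setT A /\
  forall (W : {set V}) (B : rel V), proper_subdigraph A W B -> two_dicolourable W B.

(* O_5 on 'I_5 with u = 0, v = 1, x = 2, y = 3, z = 4:
   arcs xy, yz, zx, ux, uy, uz, xv, yv, zv, uv. *)
Definition O5_arcs : seq (nat * nat) :=
  [:: (2, 3); (3, 4); (4, 2); (0, 2); (0, 3); (0, 4); (2, 1); (3, 1); (4, 1); (0, 1)].

Definition O5_arc (a b : 'I_5) : bool := (nat_of_ord a, nat_of_ord b) \in O5_arcs.

Definition contains_O5 (V : finType) (A : rel V) : Prop :=
  exists f : 'I_5 -> V, injective f /\ forall a b : 'I_5, O5_arc a b -> A (f a) (f b).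

From Stdlib Require Import Classical.
From mathcomp Require Import all_boot.

Set Implicit Arguments. Unset Strict Implicit. Unset Printing Implicit Defensive.

(* Delete the arc uv of O_5.  By criticality D - uv has a 2-dicolouring, and
   since D has none, some monochromatic directed cycle of D uses uv; the rest
   of that cycle is a v-u path in D - uv, so u and v lie in one colour class.
   A vertex w in {x, y, z} of that colour would close the path u -> w -> v
   -> ... -> u into a monochromatic cycle of D - uv.  Hence x, y, z all get
   the other colour, and the triangle xyz is a monochromatic cycle of D - uv. *)

Section Dicycles.

Variables (V : finType) (A : rel V).

Lemma closed_walk_dicycle x p :
  path A x p -> A (last x p) x -> exists2 s, dicycle A s & {subset s <= x :: p}.
Proof.
move=> Axp Alast_x; case/shortenP: Axp Alast_x => p' Axp' Uxp' sub_p' Alast_x.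
exists (x :: p'); first by rewrite /dicycle Uxp' /= rcons_path Axp' Alast_x.
by move=> y; rewrite !inE => /predU1P[-> | /sub_p' ->]; rewrite ?eqxx ?orbT.
Qed.

Lemma dicycle3 x y z :
  irreflexive A -> A x y -> A y z -> A z x -> dicycle A [:: x; y; z].
Proof.
move=> irrA Axy Ayz Azx.
have neq a b : A a b -> (a == b) = false.
  by move=> Aab; apply/eqP => eq_ab; rewrite eq_ab irrA in Aab.
rewrite /dicycle /= !inE (neq _ _ Axy) (eq_sym x) (neq _ _ Azx) (neq _ _ Ayz).
by rewrite Axy Ayz Azx.
Qed.

Lemma monochromatic_dicycle (c : V -> bool) :
  ~ two_dicolourable setT A -> exists b s, dicycle A s /\ all (fun x => c x == b) s.
Proof.
move=> ncol; apply: NNPP => no_cycle; apply: ncol; exists c => b s Ss.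
apply/negP => Ds; apply: no_cycle; exists b, s; split=> //.
by apply/allP => x /(allP Ss); rewrite !inE.
Qed.

End Dicycles.

Section DeleteArc.

Variables (V : finType) (A : rel V) (u v : V).

Definition del_arc : rel V := fun a b => A a b && ((a, b) != (u, v)).

Lemma proper_subdigraph_del_arc : A u v -> proper_subdigraph A setT del_arc.
Proof.
move=> Auv; split; first by move=> a b /andP[Aab _]; rewrite !in_setT Aab.
by right; exists u, v; rewrite /del_arc Auv eqxx.
Qed.

Lemma path_del_arc x p : v \notin p -> path A x p -> path del_arc x p.
Proof.
elim: p x => //= y p IHp x; rewrite inE negb_or => /andP[vy vp] /andP[Axy Ayp].
by rewrite /del_arc Axy xpair_eqE (eq_sym y) (negbTE vy) andbF IHp.
Qed.

Lemma dicycle_del_arc_avoid s : dicycle A s -> u \notin s -> dicycle del_arc s.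
Proof.
case/and3P=> s0 Us Cs us; rewrite /dicycle s0 Us.
apply: (sub_in_cycle (P := predC1 u)) Cs.
  by move=> a b /= au _ Aab; rewrite /del_arc Aab xpair_eqE (negbTE au).
by apply/allP => x xs /=; apply: contraNneq us => <-.
Qed.

(* Rotating the cycle to start at v, the only arc that can be missing from
   D - uv is the closing one, into v. *)
Lemma dicycle_del_arc s : dicycle A s -> ~~ dicycle del_arc s ->
  exists2 p, path del_arc v p & last v p = u /\ {subset v :: p <= s}.
Proof.
case/and3P=> s0 Us Cs; rewrite /dicycle s0 Us /= => nCs.
have vs : v \in s.
  apply: contraNT nCs => vs; move: Cs; rewrite !(cycle_path v); exact: path_del_arc.
have [i r def_s] := rot_to vs.
have /andP[vr _] : uniq (v :: r) by rewrite -def_s rot_uniq.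
move: Cs nCs; rewrite -(rot_cycle i) -[cycle del_arc s](rot_cycle i) def_s /=.
rewrite !rcons_path => /andP[Ar Alast_v].
have Br := path_del_arc vr Ar.
rewrite Br /del_arc Alast_v xpair_eqE eqxx andbT negbK => /eqP last_r.
exists r => //.
by split=> // x; rewrite -def_s mem_rot.
Qed.

Lemma del_arc_dicolouring_midpoint_colour (c : V -> bool) :
  irreflexive A -> ~ two_dicolourable setT A ->
  (forall b, acyclic_set del_arc [set x in setT | c x == b]) ->
  forall w, A u w -> A w v -> c w != c u.
Proof.
move=> irrA ncol acyc.
have [b [s [Ds cs]]] := monochromatic_dicycle c ncol.
have in_class t : (t \in [set x in setT | c x == b]) = (c t == b).
  by rewrite !inE.
have Ss : all (fun t => t \in [set x in setT | c x == b]) s.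
  by apply/allP => t /(allP cs); rewrite in_class.
have [p Bp [last_p sub_p]] := dicycle_del_arc Ds (acyc b s Ss).
have cp t : t \in v :: p -> c t = b by move=> /sub_p /(allP cs) /eqP.
have cu : c u = b by rewrite -last_p; apply: cp; apply: mem_last.
move=> w Auw Awv; rewrite cu; apply/negP => /eqP cw.
have wu : w != u by apply: contraTneq Auw => ->; rewrite irrA.
have wv : w != v by apply: contraTneq Awv => ->; rewrite irrA.
have Bwp : path del_arc w (v :: p).
  by rewrite /= Bp /del_arc Awv xpair_eqE (negbTE wu).
have Blast_w : del_arc (last w (v :: p)) w.
  by rewrite /= last_p /del_arc Auw xpair_eqE eqxx (negbTE wv).
have [s' Ds' sub_s'] := closed_walk_dicycle Bwp Blast_w.
apply: (negP (acyc b s' _)) Ds'; apply/allP => t /sub_s'.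
by rewrite in_class inE => /predU1P[-> | /cp ->]; rewrite ?cw.
Qed.

End DeleteArc.

Theorem lemma15 (V : finType) (A : rel V) :
  irreflexive A -> dicritical3 A -> ~ contains_O5 A.
Proof.
move=> irrA [ncol crit] [f [_ arcO5]].
pose u := f (@Ordinal 5 0 isT). pose v := f (@Ordinal 5 1 isT).
pose x := f (@Ordinal 5 2 isT). pose y := f (@Ordinal 5 3 isT).
pose z := f (@Ordinal 5 4 isT).
have Auv : A u v by apply: arcO5.
have [c acyc] := crit _ _ (proper_subdigraph_del_arc Auv).
have other := del_arc_dicolouring_midpoint_colour irrA ncol acyc.
have cxyz : all (fun t => c t == ~~ c u) [:: x; y; z].
  have flip t : c t != c u -> c t == ~~ c u by case: (c t); case: (c u).
  by rewrite /= !flip ?other //; apply: arcO5.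
have Dxyz : dicycle (del_arc A u v) [:: x; y; z].
  apply: dicycle_del_arc_avoid; first by apply: dicycle3 => //; apply: arcO5.
  by apply/negP => /(allP cxyz); case: (c u).
apply: (negP (acyc (~~ c u) _ _)) Dxyz.
by apply/allP => t /(allP cxyz); rewrite !inE.
Qed.
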